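(* Let $(G,\ell)$ be a group with an invariant $\Lambda$-valued pseudo-norm. Then $(G,\ell)$ is metrically LEF if and only if $G^{\square,\mathbb Q}$ has the finite model property for existential sentences with respect to $T_{IPMG}$. If $\ell$ is a norm, then $(G,\ell)$ is metrically LEF if and only if $G^{\square,\mathbb Q}$ has the finite model property for existential sentences with respect to $T_{IMG}$.
   Context: $\Lambda$ is a closed convex subset of $[0,\infty)$ containing $0$. A pseudo-norm on $G$ is $\ell:G\to\Lambda$ with $\ell(1)=0$, $\ell(g)=\ell(g^{-1})$, $\ell(gh)\le\ell(g)+\ell(h)$; a norm if $\ell(g)=0\Rightarrow g=1$; invariant if $\ell(h^{-1}gh)=\ell(g)$. $L^{\square,\mathbb Q}$ is the language of groups $(\cdot,{}^{-1},1)$ plus unary predicates $R^{\square\varepsilon}$, $\square\in\{<,>,=\}$, $\varepsilon\in\Lambda\cap\mathbb Q$; $G^{\square,\mathbb Q}$ is the group $G$ with $R^{\square\varepsilon}(g)$ interpreted as $\ell(g)\,\square\,\varepsilon$. $T_{IPMG}$ is the $L^{\square,\mathbb Q}$-theory whose models are the groups $M$ with predicates such that: for every $a\in M$ and $\varepsilon\in\Lambda\cap\mathbb Q$ exactly one of $R^{<\varepsilon}(a),R^{=\varepsilon}(a),R^{>\varepsilon}(a)$ holds (write $f(a,\varepsilon)$ for that symbol); for $q\le q'$ in $\Lambda\cap\mathbb Q$, $f(g,q)\in\{<,=\}\Rightarrow f(g,q')\in\{<,=\}$ and $f(g,q')\in\{>,=\}\Rightarrow f(g,q)\in\{>,=\}$;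 $f(1,0)$ is $=$ and $f(g,0)\in\{=,>\}$ for all $g$; $f(g,q)=f(g^{-1},q)$; if $f(g,q),f(g',q')\in\{<,=\}$ and $q+q'\in\Lambda$ then $f(gg',q+q')\in\{<,=\}$; and $f(hgh^{-1},q)=f(g,q)$. $T_{IMG}$ is $T_{IPMG}$ together with: $f(g,0)\in\{<,=\}\Rightarrow g=1$. A structure $M$ has the finite model property for existential sentences with respect to a theory $T$ if every existential $L^{\square,\mathbb Q}$-sentence true in $M$ is true in some finite model of $T$. $(G,\ell)$ is metrically LEF if for every finite $D\subseteq G$ and finite $Q\subseteq\Lambda\cap\mathbb Q$ with $0\in Q$ there are a finite group $C$ with invariant $\Lambda$-valued pseudo-norm $\ell_C$ and a map $\varphi:G\to C$ injective on $D$ with $\varphi(hg)=\varphi(h)\varphi(g)$ whenever $h,g,hg\in D$ and $\ell(g)\,\square\,q\iff\ell_C(\varphi(g))\,\square\,q$ for all $g\in D,q\in Q,\square$. *)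

From HB Require Import structures.
From mathcomp Require Import all_boot all_order all_algebra.
From mathcomp Require Import all_classical all_reals all_analysis.
From Stdlib Require Import List.
Set Implicit Arguments. Unset Strict Implicit. Unset Printing Implicit Defensive.
Import Order.TTheory GRing.Theory Num.Theory.
Import numFieldNormedType.Exports.
Local Open Scope classical_set_scope.
Local Open Scope ring_scope.

Record AbsGroup := {
  gcar :> Type;
  gmul : gcar -> gcar -> gcar;
  ginv : gcar -> gcar;
  gone : gcar;
  gmulA : forall x y z, gmul x (gmul y z) = gmul (gmul x y) z;
  gmul1x : forall x, gmul gone x = x;
  gmulx1 : forall x, gmul x gone = x;
  gmulVx : forall x, gmul (ginv x) x = gone;
  gmulxV : forall x, gmul x (ginv x) = gone }.

Definition finite_type (T : Type) : Prop := exists l : list T, forall x, List.In x l.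

Definition LambdaSet (R : realType) (L : set R) : Prop :=
  [/\ closed L,
      (forall x y t, L x -> L y -> 0 <= t -> t <= 1 -> L (t * x + (1 - t) * y)),
      (forall x, L x -> 0 <= x) &
      L 0].

Definition pseudo_norm (R : realType) (L : set R) (G : AbsGroup) (l : G -> R) : Prop :=
  [/\ (forall g, L (l g)),
      l (gone G) = 0,
      (forall g, l g = l (ginv g)) &
      (forall g h, l (gmul g h) <= l g + l h)].

Definition is_norm (R : realType) (L : set R) (G : AbsGroup) (l : G -> R) : Prop :=
  pseudo_norm L l /\ (forall g, l g = 0 -> g = gone G).

Definition invariant (R : realType) (G : AbsGroup) (l : G -> R) : Prop :=
  forall g h, l (gmul (ginv h) (gmul g h)) = l g.

Definition inv_pseudo_norm (R : realType) (L : set R) (G : AbsGroup) (l : G -> R) :=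
  pseudo_norm L l /\ invariant l.

Inductive sq := sqLt | sqEq | sqGt.

Definition cmp (R : realType) (s : sq) (x y : R) : Prop :=
  match s with sqLt => x < y | sqEq => x = y | sqGt => x > y end.

Inductive term :=
  | tvar of nat
  | tone
  | tmul of term & term
  | tinv of term.

(* quantifier-free formulas; fRel s e t is the atomic formula R^{s e}(t) *)
Inductive qformula :=
  | fEq of term & term
  | fRel of sq & rat & term
  | fNot of qformula
  | fAnd of qformula & qformula
  | fOr of qformula & qformula.

(* a formula belongs to L^{square,Q}: all predicate indices lie in Lambda /\ Q *)
Fixpoint wf_formula (R : realType) (L : set R) (f : qformula) : Prop :=
  match f with
  | fEq _ _ => True
  | fRel _ e _ => L (ratr e)
  | fNot f1 => wf_formula L f1
  | fAnd f1 f2 => wf_formula L f1 /\ wf_formula L f2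
  | fOr f1 f2 => wf_formula L f1 /\ wf_formula L f2
  end.

(* an L^{square,Q}-structure whose group reduct is a group:
   M together with interpretations rel s e of the predicates R^{s e} *)
Definition Rel (M : AbsGroup) := sq -> rat -> M -> Prop.

Fixpoint eval_term (M : AbsGroup) (v : nat -> M) (t : term) : M :=
  match t with
  | tvar n => v n
  | tone => gone M
  | tmul t1 t2 => gmul (eval_term v t1) (eval_term v t2)
  | tinv t1 => ginv (eval_term v t1)
  end.

Fixpoint sat (M : AbsGroup) (rel : Rel M) (v : nat -> M) (f : qformula) : Prop :=
  match f with
  | fEq t1 t2 => eval_term v t1 = eval_term v t2
  | fRel s e t => rel s e (eval_term v t)
  | fNot f1 => ~ sat rel v f1
  | fAnd f1 f2 => sat rel v f1 /\ sat rel v f2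
  | fOr f1 f2 => sat rel v f1 \/ sat rel v f2
  end.

(* The existential sentence "exists x_0 ... x_k, f" (k bounding the variables of
   the quantifier-free f) holds in (M, rel). *)
Definition sat_exists (M : AbsGroup) (rel : Rel M) (f : qformula) : Prop :=
  exists v : nat -> M, sat rel v f.

Definition Gstr (R : realType) (G : AbsGroup) (l : G -> R) : Rel G :=
  fun s e g => cmp s (l g) (ratr e).

Definition LQ (R : realType) (L : set R) (q : rat) : Prop := L (ratr q).

Definition leq_sym (M : AbsGroup) (rel : Rel M) q g := rel sqLt q g \/ rel sqEq q g.
Definition geq_sym (M : AbsGroup) (rel : Rel M) q g := rel sqGt q g \/ rel sqEq q g.

Definition model_IPMG (R : realType) (L : set R) (M : AbsGroup) (rel : Rel M) : Prop :=
  [/\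
      (forall a e, LQ L e ->
         [/\ rel sqLt e a \/ rel sqEq e a \/ rel sqGt e a,
             ~ (rel sqLt e a /\ rel sqEq e a),
             ~ (rel sqLt e a /\ rel sqGt e a) &
             ~ (rel sqEq e a /\ rel sqGt e a)]),
      (forall g q q', LQ L q -> LQ L q' -> (q <= q')%R ->
         (leq_sym rel q g -> leq_sym rel q' g) /\
         (geq_sym rel q' g -> geq_sym rel q g)),
      (rel sqEq 0%R (gone M) /\ (forall g, geq_sym rel 0%R g)),
      ((forall g q s, LQ L q -> (rel s q g <-> rel s q (ginv g))) /\
       (forall g h q s, LQ L q ->
         (rel s q (gmul h (gmul g (ginv h))) <-> rel s q g))) &
      (forall g g' q q', LQ L q -> LQ L q' -> LQ L (q + q') ->
         leq_sym rel q g -> leq_sym rel q' g' -> leq_sym rel (q + q') (gmul g g'))].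

Arguments model_IPMG {R} L M rel.

Definition model_IMG (R : realType) (L : set R) (M : AbsGroup) (rel : Rel M) : Prop :=
  model_IPMG L M rel /\ (forall g, leq_sym rel 0%R g -> g = gone M).
Arguments model_IMG {R} L M rel.

(* finite model property for existential sentences w.r.t. a theory given by
   its class of models *)
Definition fmp_exists (R : realType) (L : set R)
    (model : forall M : AbsGroup, Rel M -> Prop) (G : AbsGroup) (relG : Rel G) : Prop :=
  forall f : qformula, wf_formula L f -> sat_exists relG f ->
    exists (M : AbsGroup) (rel : Rel M),
      [/\ finite_type M, model M rel & sat_exists rel f].

Definition metrically_LEF (R : realType) (L : set R) (G : AbsGroup) (l : G -> R) : Prop :=
  forall (D : list G) (Qs : list rat),
    (forall q, List.In q Qs -> LQ L q) -> List.In 0%R Qs ->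
    exists (C : AbsGroup) (lC : C -> R) (phi : G -> C),
      [/\ finite_type C,
          inv_pseudo_norm L lC,
          (forall g h, List.In g D -> List.In h D -> phi g = phi h -> g = h),
          (forall h g, List.In h D -> List.In g D -> List.In (gmul h g) D ->
             phi (gmul h g) = gmul (phi h) (phi g)) &
          (forall g q s, List.In g D -> List.In q Qs ->
             (cmp s (l g) (ratr q) <-> cmp s (lC (phi g)) (ratr q)))].

(* (=>) An existential sentence true in G has finitely many witnesses.  Apply the LEF
   property to the values of all their subterms, together with the rational constants of
   the sentence: the approximating finite group, with the predicates read off its
   pseudo-norm, is a model of T_IPMG in which the sentence still holds.  For T_IMG divide
   it further by {lC = 0}, a normal subgroup because lC is invariant.
   (<=) Given D and Qs, choose a grid of rationals k/N, k <= T, containing Qs and fine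
   enough to separate every l(g), g in D, from the larger elements of Qs, and write the
   multiplication table of D, its inequalities and the position of every l(g) relative to
   the grid as one existential sentence.  In a finite model of it,
   a |-> min (K, min {k/N | R^{<= k/N}(a)}) is an invariant pseudo-norm that makes the same
   comparisons with Qs as l. *)

From mathcomp Require Import all_boot all_order all_algebra.
From mathcomp Require Import all_classical all_reals all_analysis.
From mathcomp Require Import lra.
From Stdlib Require Import List ClassicalEpsilon.
Set Implicit Arguments. Unset Strict Implicit. Unset Printing Implicit Defensive.
Import Order.TTheory GRing.Theory Num.Theory.
Local Open Scope classical_set_scope.
Local Open Scope ring_scope.

Section GroupTheory.
Variable G : AbsGroup.
Implicit Types a b : G.

Lemma gmulKg a b : gmul (ginv a) (gmul a b) = b.
Proof. by rewrite gmulA gmulVx gmul1x. Qed.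

Lemma gmulKVg a b : gmul a (gmul (ginv a) b) = b.
Proof. by rewrite gmulA gmulxV gmul1x. Qed.

Lemma ginv_uniq a b : gmul a b = gone G -> b = ginv a.
Proof. by move=> ab1; rewrite -(gmulKg a b) ab1 gmulx1. Qed.

Lemma ginvK a : ginv (ginv a) = a.
Proof. by symmetry; apply: ginv_uniq; rewrite gmulVx. Qed.

Lemma ginvM a b : ginv (gmul a b) = gmul (ginv b) (ginv a).
Proof.
by symmetry; apply: ginv_uniq; rewrite -gmulA (gmulA b) gmulxV gmul1x gmulxV.
Qed.

Lemma gidempotent a : gmul a a = a -> a = gone G.
Proof. by move=> aa; rewrite -(gmulKg a a) aa gmulVx. Qed.

End GroupTheory.

Section LambdaTheory.
Variables (R : realType) (L : set R).
Hypothesis HL : LambdaSet L.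

Lemma Lambda0 : L 0.
Proof. by case: HL. Qed.

Lemma Lambda_ge0 x : L x -> 0 <= x.
Proof. by case: HL => _ _ + _; apply. Qed.

Lemma Lambda_le x y : L x -> 0 <= y -> y <= x -> L y.
Proof.
case: HL => _ convL _ L0 Lx y0 yx.
have [x0|x0] := eqVneq x 0.
  by have -> : y = 0 by apply/le_anti; rewrite y0 -x0 yx.
have xp : 0 < x by rewrite lt_def x0 (le_trans y0 yx).
have := convL x 0 (y / x) Lx L0.
rewrite mulr0 addr0 divfK //; apply; first by rewrite divr_ge0 // ltW.
by rewrite ler_pdivrMr // mul1r.
Qed.

End LambdaTheory.

Lemma list_ub_in (R : realType) (P : set R) (s : list R) :
  P 0 -> (forall x, In x s -> P x) -> exists2 m, P m & forall x, In x s -> x <= m.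
Proof.
move=> P0; elim: s => [|x s IH] Ps; first by exists 0.
have [m Pm sm] := IH (fun y sy => Ps y (or_intror sy)).
exists (Num.max x m) => [|y [<-|sy]]; last 2 first.
- by rewrite le_max lexx.
- by rewrite le_max sm ?orbT.
by rewrite /Num.max; case: ifP => _; [exact: Pm|apply: Ps; left].
Qed.

Definition compare_sq (R : realType) (x y : R) : sq :=
  if x < y then sqLt else if x == y then sqEq else sqGt.

Lemma cmp_compare_sq (R : realType) (x y : R) : cmp (compare_sq x y) x y.
Proof. by rewrite /compare_sq; case: ltgtP => //= ->. Qed.

Lemma cmp_uniq (R : realType) s t (x y : R) : cmp s x y -> cmp t x y -> s = t.
Proof.
case: s; case: t => //= h1 h2; try subst x;
  by [rewrite ltxx in h1 | rewrite ltxx in h2 | have := lt_trans h1 h2; rewrite ltxx].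
Qed.

Lemma cmp_same (R : realType) s (x z y : R) :
  cmp s x y -> cmp s z y -> forall t, cmp t x y <-> cmp t z y.
Proof.
by move=> sx sz t; split=> tx; [rewrite -(cmp_uniq sx tx)|rewrite -(cmp_uniq sz tx)].
Qed.

Definition grid (N k : nat) : rat := k%:R / N%:R.

Lemma ratr_grid (R : realType) N k : ratr (grid N k) = k%:R / N%:R :> R.
Proof. by rewrite fmorph_div !rmorph_nat. Qed.

Lemma grid0 N : grid N 0 = 0.
Proof. by rewrite /grid mul0r. Qed.

Lemma gridD N k n : grid N (k + n) = grid N k + grid N n.
Proof. by rewrite /grid natrD mulrDl. Qed.

Lemma grid_ge0 (R : realType) N k : 0 <= ratr (grid N k) :> R.
Proof. by rewrite ratr_grid divr_ge0. Qed.

Lemma ler_grid (R : realType) N k n : (0 < N)%N ->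
  (ratr (grid N k) <= ratr (grid N n) :> R) = (k <= n)%N.
Proof. by move=> N0; rewrite !ratr_grid ler_pM2r ?ler_nat // invr_gt0 ltr0n. Qed.

Lemma ltr_grid (R : realType) N k n : (0 < N)%N ->
  (ratr (grid N k) < ratr (grid N n) :> R) = (k < n)%N.
Proof. by move=> N0; rewrite !ratr_grid ltr_pM2r ?ltr_nat // invr_gt0 ltr0n. Qed.

Lemma grid_refine N m k : (0 < N)%N -> grid N k = grid (N * m.+1) (k * m.+1).
Proof.
by move=> N0; rewrite /grid !natrM invfM mulrACA divff ?mulr1 // pnatr_eq0.
Qed.

Lemma grid_le_truncn (R : realType) N k (y : R) : (0 < N)%N -> 0 <= y ->
  (ratr (grid N k) <= y) = (k <= Num.truncn (y * N%:R))%N.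
Proof.
move=> N0 y0; rewrite ratr_grid ler_pdivrMr ?ltr0n // truncn_ge_nat //.
by rewrite mulr_ge0.
Qed.

Lemma rat_ge0_nat_frac (q : rat) : 0 <= q -> exists n d : nat, (0 < d)%N /\ q = n%:R / d%:R.
Proof.
move=> q0.
have hn : numq q = (`|numq q|%N)%:Z by rewrite gez0_abs // numq_ge0.
have hd : denq q = (`|denq q|%N)%:Z by rewrite gez0_abs // ltW // denq_gt0.
exists `|numq q|%N, `|denq q|%N; split; first by rewrite -ltz_nat -hd denq_gt0.
by rewrite -{1}[q]divq_num_den hn hd.
Qed.

Lemma common_denominator (Qs : list rat) : (forall q, In q Qs -> 0 <= q) ->
  exists2 N, (0 < N)%N & forall q, In q Qs -> exists k, q = grid N k.
Proof.
elim: Qs => [|q Qs IH] Qs0; first by exists 1%N.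
have [N N0 HN] := IH (fun q' h => Qs0 q' (or_intror h)).
have [n [d [d0 ->]]] := rat_ge0_nat_frac (Qs0 q (or_introl erefl)).
exists (N * d)%N => [|q' [<-|/HN[k ->]]]; first by rewrite muln_gt0 N0.
- by exists (N * n)%N; rewrite /grid !natrM invfM mulrACA divff ?mul1r // pnatr_eq0 -lt0n.
- by exists (k * d)%N; rewrite /grid !natrM invfM mulrACA divff ?mulr1 // pnatr_eq0 -lt0n.
Qed.

Lemma fine_grid (R : realType) (xs : list R) (Qs : list rat) :
  (forall x, In x xs -> 0 <= x) -> (forall q, In q Qs -> 0 <= q) ->
  exists2 N, (0 < N)%N &
    (forall q, In q Qs -> exists k, q = grid N k) /\
    (forall x q, In x xs -> In q Qs -> x < ratr q ->
       exists k, x <= ratr (grid N k) < @ratr R q).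
Proof.
(* N is a common denominator of Qs with 1/N below every positive gap q - x. *)
move=> xs0 Qs0; have [N0 N0_gt0 onN0] := common_denominator Qs0.
pose gaps := flat_map (fun x => map (fun q => (ratr q - x)^-1) Qs) xs.
have [B _ gapsB] := @list_ub_in R setT gaps I (fun _ _ => I).
pose N := (N0 * (Num.truncn B).+1)%N.
have N_gt0 : (0 < N)%N by rewrite muln_gt0 N0_gt0.
have onN q : In q Qs -> exists k, q = grid N k.
  by move=> /onN0[k ->]; exists (k * (Num.truncn B).+1)%N; apply: grid_refine.
exists N => //; split=> // x q xs_x Qs_q xq.
have [k qk] := onN q Qs_q; subst q.
have gap_gt0 : 0 < ratr (grid N k) - x :> R by rewrite subr_gt0.
have gapN : N%:R^-1 < ratr (grid N k) - x :> R.
  rewrite -invf_plt ?posrE ?ltr0n //.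
  apply: le_lt_trans (gapsB _ _) _.
    by apply/in_flat_map; exists x; split=> //; apply: in_map.
  apply: lt_le_trans (truncnS_gt B) _.
  by rewrite ler_nat leq_pmull.
have k_gt0 : (0 < k)%N.
  by rewrite -(ltr_grid R 0 k N_gt0); apply: le_lt_trans xq; rewrite ratr_grid mul0r xs0.
exists k.-1; rewrite ltr_grid // prednK // leqnn andbT.
have : ratr (grid N k) = ratr (grid N k.-1) + N%:R^-1 :> R.
  by rewrite !ratr_grid -{1}(prednK k_gt0) -addn1 natrD mulrDl mul1r.
lra.
Qed.

Section ModelTheory.
Variables (R : realType) (L : set R) (M : AbsGroup) (rel : Rel M).
Hypothesis HL : LambdaSet L.
Hypothesis Hmod : model_IPMG L M rel.

Lemma model_leq_compare q (x : R) c : LQ L q ->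
  rel (compare_sq x (ratr q)) q c -> (leq_sym rel q c <-> x <= ratr q).
Proof.
case: Hmod => trich _ _ _ _ Lq; have [_ _ notLG notEG] := trich c q Lq.
rewrite /compare_sq; case: ltgtP => /= xq relc.
- by split=> _; last left.
- by split=> // -[cLt|cEq]; [case: notLG|case: notEG].
- by split=> _; last right.
Qed.

Lemma model_leq_one : leq_sym rel 0 (gone M).
Proof. by case: Hmod => _ _ [rel1 _] _ _; right. Qed.

Lemma model_leq_inv q a : LQ L q -> (leq_sym rel q (ginv a) <-> leq_sym rel q a).
Proof. by case: Hmod => _ _ _ [relV _] _ Lq; rewrite /leq_sym -!(relV a q _ Lq). Qed.

Lemma model_leq_conj q a h : LQ L q ->
  (leq_sym rel q (gmul (ginv h) (gmul a h)) <-> leq_sym rel q a).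
Proof.
case: Hmod => _ _ _ [_ relJ] _ Lq.
have := relJ a (ginv h) q; rewrite ginvK => relJh.
by rewrite /leq_sym !relJh.
Qed.

Variables (N T : nat) (K : R).
Hypothesis N_gt0 : (0 < N)%N.
Hypothesis grid_Lambda : forall k, (k <= T)%N -> LQ L (grid N k).
Hypothesis LK : L K.
(* A sum of grid points that leaves the grid still dominates the cap K: this is what
   makes model_norm subadditive. *)
Hypothesis K_lt : K < ratr (grid N T.+1).

Local Notation gr k := (ratr (grid N k) : R).

Definition model_norm (a : M) : R :=
  \big[Num.min/K]_(k < T.+1 | `[< leq_sym rel (grid N k) a >]) gr k.

Lemma model_norm_ind (P : R -> Prop) a : P K ->
  (forall k, (k <= T)%N -> leq_sym rel (grid N k) a -> P (gr k)) -> P (model_norm a).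
Proof.
move=> PK Pgr; apply: big_ind => // [x y Px Py|k /asboolP].
  by rewrite minElt; case: ifP.
by apply: Pgr; rewrite -ltnS.
Qed.

Lemma model_norm_le a k : (k <= T)%N -> leq_sym rel (grid N k) a -> model_norm a <= gr k.
Proof.
by rewrite -ltnS => kT ak; apply: (@bigmin_le_cond _ _ _ K (Ordinal kT)); apply/asboolP.
Qed.

Lemma model_norm_leK a : model_norm a <= K.
Proof. exact: bigmin_le_id. Qed.

Lemma model_norm_ge0 a : 0 <= model_norm a.
Proof.
apply: (model_norm_ind (P := fun y => 0 <= y)) => /= [|k _ _]; last exact: grid_ge0.
exact: (Lambda_ge0 HL LK).
Qed.

Lemma eq_model_norm a b :
  (forall k, (k <= T)%N -> (leq_sym rel (grid N k) a <-> leq_sym rel (grid N k) b)) ->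
  model_norm a = model_norm b.
Proof.
move=> ab; apply: eq_bigl => k; have kT : (k <= T)%N by rewrite -ltnS.
by have [ab1 ba] := ab k kT; apply/asboolP/asboolP => [/ab1|/ba].
Qed.

Lemma model_norm_mul_grid a b k1 k2 : (k1 <= T)%N -> (k2 <= T)%N ->
  leq_sym rel (grid N k1) a -> leq_sym rel (grid N k2) b ->
  model_norm (gmul a b) <= gr k1 + gr k2.
Proof.
move=> k1T k2T ak1 bk2; rewrite -rmorphD -gridD.
have [k12T|] := leqP (k1 + k2) T.
  apply: model_norm_le => //; case: Hmod => _ _ _ _ tri.
  by rewrite gridD; apply: tri => //; rewrite -?gridD; apply: grid_Lambda.
move=> Tk12; apply: le_trans (model_norm_leK _) (le_trans (ltW K_lt) _).
by rewrite ler_grid.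
Qed.

Lemma model_norm_inv_pseudo_norm : inv_pseudo_norm L model_norm.
Proof.
have model_normJ g h : model_norm (gmul (ginv h) (gmul g h)) = model_norm g.
  by apply: eq_model_norm => k kT; apply: model_leq_conj; apply: grid_Lambda.
split=> //; split=> [g|||g h].
- by apply: model_norm_ind => // k kT _; apply: grid_Lambda.
- apply: le_anti; rewrite model_norm_ge0 andbT.
  have := @model_norm_le (gone M) 0 (leq0n T); rewrite grid0 rmorph0; apply.
  exact: model_leq_one.
- by move=> g; apply: eq_model_norm => k kT; rewrite model_leq_inv //; apply: grid_Lambda.
- apply: (model_norm_ind (P := fun x => model_norm (gmul g h) <= x + model_norm h)) => /=.
    by rewrite -[X in X <= _]addr0 lerD ?model_norm_leK ?model_norm_ge0.
  move=> k1 k1T gk1.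
  apply: (model_norm_ind (P := fun y => model_norm (gmul g h) <= gr k1 + y)) => /= [|k2 k2T hk2].
    by rewrite -[X in X <= _]add0r lerD ?model_norm_leK ?grid_ge0.
  exact: model_norm_mul_grid.
Qed.

Lemma model_norm_cmp c (x : R) kq : (kq <= T)%N -> x <= K ->
  (forall k, (k <= T)%N -> (leq_sym rel (grid N k) c <-> x <= gr k)) ->
  (x < gr kq -> exists k, x <= gr k < gr kq) ->
  forall s, cmp s x (gr kq) <-> cmp s (model_norm c) (gr kq).
Proof.
move=> kqT xK cx fine; apply: cmp_same (cmp_compare_sq x (gr kq)) _.
have lower (P : R -> Prop) : P K -> (forall y, x <= y -> P y) -> P (model_norm c).
  by move=> PK Px; apply: model_norm_ind => // k kT /(cx k kT); apply: Px.
rewrite /compare_sq; case: ltgtP => /= [xkq|kqx|xkq].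
- have [k /andP[xk kkq]] := fine xkq.
  have kT : (k <= T)%N by rewrite (leq_trans _ kqT) // ltnW // -(ltr_grid R _ _ N_gt0).
  by apply: le_lt_trans kkq; apply: (model_norm_le kT); apply/(cx k kT).
- by apply: (lower (fun y => gr kq < y)) => [|y]; [apply: lt_le_trans xK|apply: lt_le_trans].
- apply: le_anti; rewrite (model_norm_le kqT) ?(cx kq kqT) ?xkq //=.
  by rewrite -xkq; apply: (lower (fun y => x <= y)).
Qed.

End ModelTheory.

Lemma leq_Gstr (R : realType) (C : AbsGroup) (lC : C -> R) q g :
  leq_sym (Gstr lC) q g <-> lC g <= ratr q.
Proof.
rewrite /leq_sym /Gstr /= le_eqVlt; split; last by case/orP=> [/eqP|]; [right|left].
by case=> [lt|->]; rewrite ?lt ?eqxx ?orbT.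
Qed.

Lemma geq_Gstr (R : realType) (C : AbsGroup) (lC : C -> R) q g :
  geq_sym (Gstr lC) q g <-> ratr q <= lC g.
Proof.
rewrite /geq_sym /Gstr /= le_eqVlt; split; last by case/orP=> [/eqP|]; [right|left].
by case=> [lt|->]; rewrite ?lt ?eqxx ?orbT.
Qed.

Section GstrModel.
Variables (R : realType) (L : set R) (C : AbsGroup) (lC : C -> R).
Hypotheses (HL : LambdaSet L) (HlC : inv_pseudo_norm L lC).

Lemma Gstr_model_IPMG : model_IPMG L C (Gstr lC).
Proof.
have [[lC_L lC1 lCV lCM] lCJ] := HlC.
split.
- move=> a e _; rewrite /Gstr /=; split.
  + by case: ltgtP => h; [left|right; right|right; left].
  + by case=> lt eq; rewrite eq ltxx in lt.
  + by case=> lt gt; have := lt_trans lt gt; rewrite ltxx.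
  + by case=> eq gt; rewrite eq ltxx in gt.
- move=> g q q' _ _ qq'; rewrite !leq_Gstr !geq_Gstr.
  have qq'R : ratr q <= ratr q' :> R by rewrite ler_rat.
  by split=> h; [exact: le_trans h qq'R|exact: le_trans qq'R h].
- split; first by rewrite /Gstr /= lC1 rmorph0.
  by move=> g; rewrite geq_Gstr rmorph0 (Lambda_ge0 HL).
- split=> [g q s _|g h q s _]; rewrite /Gstr /=; first by rewrite -lCV.
  by have := lCJ g (ginv h); rewrite ginvK => ->.
- move=> g g' q q' _ _ _; rewrite !leq_Gstr rmorphD => gq g'q'.
  exact: le_trans (lCM g g') (lerD gq g'q').
Qed.

Lemma Gstr_model_IMG : (forall g, lC g = 0 -> g = gone C) -> model_IMG L C (Gstr lC).
Proof.
move=> lC_def; split=> [|g]; first exact: Gstr_model_IPMG.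
rewrite leq_Gstr rmorph0 => g0; apply: lC_def; apply: le_anti.
by rewrite g0 (Lambda_ge0 HL); case: HlC => -[].
Qed.

End GstrModel.

Fixpoint subterm_values (G : AbsGroup) (v : nat -> G) (t : term) : list G :=
  eval_term v t :: match t with
                   | tmul a b => subterm_values v a ++ subterm_values v b
                   | tinv a => subterm_values v a
                   | _ => nil
                   end.

Lemma eval_subterm_values (G : AbsGroup) (v : nat -> G) t :
  In (eval_term v t) (subterm_values v t).
Proof. by case: t => *; left. Qed.

Fixpoint formula_terms (f : qformula) : list term :=
  match f with
  | fEq t1 t2 => t1 :: t2 :: nil
  | fRel _ _ t => t :: nil
  | fNot f1 => formula_terms f1
  | fAnd f1 f2 | fOr f1 f2 => formula_terms f1 ++ formula_terms f2
  end.

Fixpoint formula_consts (f : qformula) : list rat :=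
  match f with
  | fEq _ _ => nil
  | fRel _ e _ => e :: nil
  | fNot f1 => formula_consts f1
  | fAnd f1 f2 | fOr f1 f2 => formula_consts f1 ++ formula_consts f2
  end.

Lemma formula_consts_Lambda (R : realType) (L : set R) f :
  wf_formula L f -> forall e, In e (formula_consts f) -> LQ L e.
Proof.
elim: f => [t1 t2|s e t|f1 IH|f1 IH1 f2 IH2|f1 IH1 f2 IH2] //=.
- by move=> Le e' [<-|[]].
- by move=> [wf1 wf2] e /(@in_app_or _ _ _ e) [/(IH1 wf1 e)|/(IH2 wf2 e)].
- by move=> [wf1 wf2] e /(@in_app_or _ _ _ e) [/(IH1 wf1 e)|/(IH2 wf2 e)].
Qed.

Definition metric_approx (R : realType) (G C : AbsGroup) (l : G -> R) (lC : C -> R)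
    (phi : G -> C) (D : list G) (Qs : list rat) : Prop :=
  [/\ (forall g h, In g D -> In h D -> phi g = phi h -> g = h),
      (forall h g, In h D -> In g D -> In (gmul h g) D ->
         phi (gmul h g) = gmul (phi h) (phi g)) &
      (forall g q s, In g D -> In q Qs ->
         (cmp s (l g) (ratr q) <-> cmp s (lC (phi g)) (ratr q)))].

Section Transfer.
Variables (R : realType) (G C : AbsGroup) (l : G -> R) (lC : C -> R) (phi : G -> C).
Variables (D : list G) (Qs : list rat).
Hypothesis D1 : In (gone G) D.
Hypothesis phi_approx : metric_approx l lC phi D Qs.

Lemma approx_phi1 : phi (gone G) = gone C.
Proof. by case: phi_approx => _ phiM _; apply: gidempotent; rewrite -phiM ?gmul1x. Qed.

Lemma approx_eval_term v t : (forall x, In x (subterm_values v t) -> In x D) ->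
  phi (eval_term v t) = eval_term (fun n => phi (v n)) t.
Proof.
case: phi_approx => _ phiM _.
elim: t => [n||a IHa b IHb|a IHa] /= Dt //; first exact: approx_phi1.
- have Da x : In x (subterm_values v a) -> In x D by move=> ?; apply/Dt/or_intror/in_or_app; left.
  have Db x : In x (subterm_values v b) -> In x D by move=> ?; apply/Dt/or_intror/in_or_app; right.
  rewrite phiM; first by rewrite IHa ?IHb.
  + exact/Da/eval_subterm_values.
  + exact/Db/eval_subterm_values.
  + by apply: Dt; left.
- have Da x : In x (subterm_values v a) -> In x D by move=> ?; apply/Dt/or_intror.
  rewrite -IHa //; apply: ginv_uniq.
  rewrite -phiM ?gmulxV ?approx_phi1 //; first exact/Da/eval_subterm_values.
  by apply: Dt; left.
Qed.

Lemma approx_sat v f :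
  (forall t, In t (formula_terms f) -> forall x, In x (subterm_values v t) -> In x D) ->
  (forall e, In e (formula_consts f) -> In e Qs) ->
  (sat (Gstr l) v f <-> sat (Gstr lC) (fun n => phi (v n)) f).
Proof.
case: phi_approx => phi_inj _ phi_cmp.
elim: f => /= [t1 t2|s e t|f1 IH|f1 IH1 f2 IH2|f1 IH1 f2 IH2] Dterms Qconsts.
- have [D1t D2t] := (Dterms t1 (or_introl erefl), Dterms t2 (or_intror (or_introl erefl))).
  rewrite -!approx_eval_term //; split=> [->//|].
  by apply: phi_inj; [apply: D1t|apply: D2t]; apply: eval_subterm_values.
- have Dt := Dterms t (or_introl erefl).
  rewrite /Gstr -approx_eval_term //; apply: phi_cmp; last by apply: Qconsts; left.
  by apply: Dt; apply: eval_subterm_values.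
- by rewrite IH.
- by rewrite IH1 ?IH2 // => [t|e|t|e] ?; (apply: Dterms || apply: Qconsts);
  apply: in_or_app; [right|right|left|left].
- by rewrite IH1 ?IH2 // => [t|e|t|e] ?; (apply: Dterms || apply: Qconsts);
  apply: in_or_app; [right|right|left|left].
Qed.

End Transfer.

Lemma fmp_exists_of_approx (R : realType) (L : set R) (HL : LambdaSet L)
    (G : AbsGroup) (l : G -> R) (model : forall M : AbsGroup, Rel M -> Prop)
    (P : forall C : AbsGroup, (C -> R) -> Prop) :
  (forall (C : AbsGroup) (lC : C -> R), inv_pseudo_norm L lC -> P C lC ->
     model C (Gstr lC)) ->
  (forall (D : list G) (Qs : list rat), (forall q, In q Qs -> LQ L q) -> In 0 Qs ->
     exists (C : AbsGroup) (lC : C -> R) (phi : G -> C),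
       [/\ finite_type C, inv_pseudo_norm L lC, P C lC & metric_approx l lC phi D Qs]) ->
  fmp_exists L model (Gstr l).
Proof.
move=> modelP approx f wf [v sat_f].
pose D := gone G :: flat_map (subterm_values v) (formula_terms f).
have [||C [lC [phi [finC normC PC phi_approx]]]] := approx D (0 :: formula_consts f).
- move=> q [<-|]; last exact: formula_consts_Lambda.
  by rewrite /LQ rmorph0; apply: Lambda0.
- by left.
exists C, (Gstr lC); split=> //; first exact: modelP.
have Dterms t : In t (formula_terms f) -> forall x, In x (subterm_values v t) -> In x D.
  by move=> ft x tx; right; apply/in_flat_map; exists t.
have Qconsts e : In e (formula_consts f) -> In e (0 :: formula_consts f) by right.
have D1 : In (gone G) D by rewrite /D; left.
by exists (fun n => phi (v n)); apply/(approx_sat D1 phi_approx Dterms Qconsts).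
Qed.

Definition congruence (G : AbsGroup) (e : G -> G -> Prop) : Prop :=
  [/\ forall a, e a a,
      forall a b, e a b -> e b a,
      forall a b c, e a b -> e b c -> e a c,
      forall a a' b b', e a a' -> e b b' -> e (gmul a b) (gmul a' b') &
      forall a a', e a a' -> e (ginv a) (ginv a')].

Section QuotientGroup.
Variables (G : AbsGroup) (e : G -> G -> Prop).
Hypothesis e_cong : congruence e.

Let e_refl a : e a a. Proof. by case: e_cong. Qed.
Let e_sym a b : e a b -> e b a. Proof. by case: e_cong => _ + _ _ _; apply. Qed.
Let e_trans a b c : e a b -> e b c -> e a c. Proof. by case: e_cong => _ _ + _ _; apply. Qed.

Definition class_rep (a : G) : G := epsilon (inhabits (gone G)) (fun b => e b a).

Lemma class_rep_e a : e (class_rep a) a.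
Proof. by apply: (epsilon_spec (inhabits (gone G)) (fun b => e b a)); exists a; apply: e_refl. Qed.

Lemma class_rep_eq a b : e a b -> class_rep a = class_rep b.
Proof.
move=> ab; rewrite /class_rep; congr epsilon; apply: funext => c; apply: propext.
by split=> [ca|cb]; [apply: e_trans ab|apply: e_trans cb (e_sym ab)].
Qed.

Lemma class_rep_idem a : class_rep (class_rep a) = class_rep a.
Proof. exact/class_rep_eq/class_rep_e. Qed.

Definition quot := {a : G | class_rep a = a}.

Definition qclass (a : G) : quot := exist _ (class_rep a) (class_rep_idem a).

Lemma qclass_val (x : quot) : qclass (sval x) = x.
Proof. by case: x => a ra; apply: eq_exist. Qed.

Lemma qclass_eq a b : e a b -> qclass a = qclass b.
Proof. by move=> ab; apply: eq_exist; apply: class_rep_eq. Qed.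

Lemma qclass_eqE a b : qclass a = qclass b -> e a b.
Proof.
move=> /(congr1 sval) /= rab.
by apply: e_trans (e_sym (class_rep_e a)) _; rewrite rab; apply: class_rep_e.
Qed.

Lemma quot_ind (P : quot -> Prop) : (forall a, P (qclass a)) -> forall x, P x.
Proof. by move=> Pclass x; rewrite -(qclass_val x). Qed.

Definition qmul (x y : quot) : quot := qclass (gmul (sval x) (sval y)).
Definition qinv (x : quot) : quot := qclass (ginv (sval x)).

Lemma qmul_class a b : qmul (qclass a) (qclass b) = qclass (gmul a b).
Proof. by case: e_cong => _ _ _ e_mul _; apply/qclass_eq/e_mul; apply: class_rep_e. Qed.

Lemma qinv_class a : qinv (qclass a) = qclass (ginv a).
Proof. by case: e_cong => _ _ _ _ e_inv; apply/qclass_eq/e_inv; apply: class_rep_e. Qed.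

Lemma qmulA x y z : qmul x (qmul y z) = qmul (qmul x y) z.
Proof.
by elim/quot_ind: x; elim/quot_ind: y; elim/quot_ind: z => *; rewrite !qmul_class gmulA.
Qed.

Lemma qmul1x x : qmul (qclass (gone G)) x = x.
Proof. by elim/quot_ind: x => a; rewrite qmul_class gmul1x. Qed.

Lemma qmulx1 x : qmul x (qclass (gone G)) = x.
Proof. by elim/quot_ind: x => a; rewrite qmul_class gmulx1. Qed.

Lemma qmulVx x : qmul (qinv x) x = qclass (gone G).
Proof. by elim/quot_ind: x => a; rewrite qinv_class qmul_class gmulVx. Qed.

Lemma qmulxV x : qmul x (qinv x) = qclass (gone G).
Proof. by elim/quot_ind: x => a; rewrite qinv_class qmul_class gmulxV. Qed.

Definition quot_group : AbsGroup := Build_AbsGroup qmulA qmul1x qmulx1 qmulVx qmulxV.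

Lemma finite_quot : finite_type G -> finite_type quot_group.
Proof.
case=> s sG; exists (map qclass s); elim/quot_ind => a.
exact: in_map.
Qed.

End QuotientGroup.

Section NormKernel.
Variables (R : realType) (L : set R) (C : AbsGroup) (lC : C -> R).
Hypotheses (HL : LambdaSet L) (HlC : inv_pseudo_norm L lC).

Definition norm_eqv (a b : C) := lC (gmul (ginv a) b) = 0.

Let lC_ge0 a : 0 <= lC a.
Proof. by apply: (Lambda_ge0 HL); case: HlC => -[]. Qed.

Let norm_eqv_le0 a b : lC (gmul (ginv a) b) <= 0 -> norm_eqv a b.
Proof. by move=> ab; apply: le_anti; rewrite ab lC_ge0. Qed.

Lemma norm_eqv_refl a : norm_eqv a a.
Proof. by rewrite /norm_eqv gmulVx; case: HlC => -[]. Qed.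

Lemma norm_eqv_sym a b : norm_eqv a b -> norm_eqv b a.
Proof. by case: HlC => -[_ _ lCV _] _; rewrite /norm_eqv lCV ginvM ginvK. Qed.

Lemma norm_eqv_trans a b c : norm_eqv a b -> norm_eqv b c -> norm_eqv a c.
Proof.
case: HlC => -[_ _ _ lCM] _ ab bc; apply: norm_eqv_le0.
by rewrite -(gmulKVg b c) gmulA; apply: le_trans (lCM _ _) _; rewrite ab bc addr0.
Qed.

Lemma norm_eqv_mul a a' b b' :
  norm_eqv a a' -> norm_eqv b b' -> norm_eqv (gmul a b) (gmul a' b').
Proof.
case: HlC => -[_ _ _ lCM] lCJ aa' bb'; apply: norm_eqv_le0.
have -> : gmul (ginv (gmul a b)) (gmul a' b') =
          gmul (gmul (ginv b) (gmul (gmul (ginv a) a') b)) (gmul (ginv b) b').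
  by rewrite ginvM -!gmulA (gmulA b) gmulxV gmul1x.
by apply: le_trans (lCM _ _) _; rewrite lCJ aa' bb' addr0.
Qed.

Lemma norm_eqv_inv a a' : norm_eqv a a' -> norm_eqv (ginv a) (ginv a').
Proof.
case: HlC => -[_ _ lCV _] lCJ aa'; rewrite /norm_eqv ginvK.
have -> : gmul a (ginv a') = gmul (ginv (ginv a)) (gmul (gmul (ginv a') a) (ginv a)).
  by rewrite ginvK -(gmulA (ginv a')) gmulxV gmulx1.
by rewrite lCJ lCV ginvM ginvK.
Qed.

Lemma norm_eqv_norm a b : norm_eqv a b -> lC a = lC b.
Proof.
case: HlC => -[_ _ _ lCM] _ ab; have ba := norm_eqv_sym ab.
apply: le_anti; apply/andP; split.
  by rewrite -{1}(gmulKVg b a); apply: le_trans (lCM _ _) _; rewrite ba addr0.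
by rewrite -{1}(gmulKVg a b); apply: le_trans (lCM _ _) _; rewrite ab addr0.
Qed.

Lemma norm_eqv_congruence : congruence norm_eqv.
Proof.
split; [exact: norm_eqv_refl|exact: norm_eqv_sym|exact: norm_eqv_trans|
       exact: norm_eqv_mul|exact: norm_eqv_inv].
Qed.

Definition norm_quot : AbsGroup := quot_group norm_eqv_congruence.

Local Notation norm_class := (qclass norm_eqv_congruence).
Local Notation norm_quot_ind := (@quot_ind _ _ norm_eqv_congruence).

Definition quot_norm (x : norm_quot) : R := lC (sval x).

Lemma quot_norm_class a : quot_norm (norm_class a) = lC a.
Proof. exact: norm_eqv_norm (class_rep_e norm_eqv_congruence a). Qed.

Lemma norm_classM a b :
  norm_class (gmul a b) = gmul (norm_class a : norm_quot) (norm_class b).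
Proof. exact/esym/qmul_class. Qed.

Lemma quot_norm_inv_pseudo_norm : inv_pseudo_norm L quot_norm.
Proof.
have [[lC_L lC1 lCV lCM] lCJ] := HlC.
split; [split|] => [x||x|x y|x y]; first exact: lC_L.
- by rewrite /= quot_norm_class.
- by elim/norm_quot_ind: x => a; rewrite /= qinv_class !quot_norm_class.
- elim/norm_quot_ind: x => a; elim/norm_quot_ind: y => b.
  by rewrite /= qmul_class !quot_norm_class.
- elim/norm_quot_ind: x => a; elim/norm_quot_ind: y => b.
  by rewrite /= qinv_class !qmul_class !quot_norm_class.
Qed.

Lemma quot_norm_eq0 x : quot_norm x = 0 -> x = gone norm_quot.
Proof.
elim/norm_quot_ind: x => a; rewrite quot_norm_class => a0.
apply: (qclass_eq norm_eqv_congruence).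
by case: HlC => -[_ _ lCV _] _; rewrite /norm_eqv gmulx1 -lCV.
Qed.

End NormKernel.

Lemma normed_approx (R : realType) (L : set R) (HL : LambdaSet L)
    (G : AbsGroup) (l : G -> R) (D : list G) (Qs : list rat) :
  is_norm L l -> metrically_LEF L l ->
  (forall q, In q Qs -> LQ L q) -> In 0 Qs ->
  exists (C : AbsGroup) (lC : C -> R) (phi : G -> C),
    [/\ finite_type C, inv_pseudo_norm L lC, (forall c, lC c = 0 -> c = gone C) &
        metric_approx l lC phi D Qs].
Proof.
move=> [_ l_def] lef QsL Qs0.
(* D' contains the quotients g^-1 h, so that injectivity on D survives the division of
   the approximation by {lC = 0}. *)
pose D' := gone G :: D ++ map (@ginv G) D ++
           flat_map (fun g => map (fun h => gmul (ginv g) h) D) D.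
have D'D g : In g D -> In g D' by move=> Dg; right; apply: in_or_app; left.
have D'V g : In g D -> In (ginv g) D'.
  by move=> Dg; right; apply: in_or_app; right; apply: in_or_app; left; apply: in_map.
have D'VM g h : In g D -> In h D -> In (gmul (ginv g) h) D'.
  move=> Dg Dh; right; apply: in_or_app; right; apply: in_or_app; right.
  by apply/in_flat_map; exists g; split=> //; apply: in_map.
have [C [lC [phi [finC normC phi_inj phiM phi_cmp]]]] := lef D' Qs QsL Qs0.
have phi1 : phi (gone G) = gone C.
  by apply: gidempotent; rewrite -phiM ?gmul1x //; left.
have phiV g : In g D -> phi (ginv g) = ginv (phi g).
  move=> Dg; apply: ginv_uniq.
  by rewrite -phiM ?gmulxV; [|apply: D'D|apply: D'V|left].
exists (norm_quot HL normC), (quot_norm (HlC := normC)),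
  (fun g => qclass (norm_eqv_congruence HL normC) (phi g)).
split; [exact: finite_quot|exact: quot_norm_inv_pseudo_norm|exact: quot_norm_eq0|split].
- move=> g h Dg Dh /qclass_eqE.
  rewrite /norm_eqv -phiV // -phiM; [move=> phi0|exact: D'V|exact: D'D|exact: D'VM].
  have := (phi_cmp _ 0 sqEq (D'VM g h Dg Dh) Qs0).2; rewrite /= rmorph0 => /(_ phi0).
  by move/l_def => gh1; rewrite -(gmulKVg g h) gh1 gmulx1.
- by move=> h g Dh Dg Dhg; rewrite phiM ?norm_classM //; apply: D'D.
- by move=> g q s Dg Qq; rewrite quot_norm_class; apply: phi_cmp => //; apply: D'D.
Qed.

Record adapted_grid (R : realType) (L : set R) (xs : list R) (Qs : list rat)
    (N T : nat) (K : R) : Prop := AdaptedGrid {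
  grid_gt0 : (0 < N)%N;
  grid_Lambda : forall k, (k <= T)%N -> LQ L (grid N k);
  grid_bound_Lambda : L K;
  grid_bound_lt : K < ratr (grid N T.+1);
  grid_bound_ge : forall x, In x xs -> x <= K;
  grid_Qs : forall q, In q Qs -> exists2 k, (k <= T)%N & q = grid N k;
  grid_fine : forall x q, In x xs -> In q Qs -> x < ratr q ->
    exists k, x <= ratr (grid N k) < @ratr R q }.

Lemma exists_adapted_grid (R : realType) (L : set R) (HL : LambdaSet L)
    (xs : list R) (Qs : list rat) :
  (forall x, In x xs -> L x) -> (forall q, In q Qs -> LQ L q) ->
  exists N T K, adapted_grid L xs Qs N T K.
Proof.
move=> xsL QsL.
have Qs0 q : In q Qs -> 0 <= q by move/QsL/(Lambda_ge0 HL); rewrite ler0q.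
have [N N_gt0 [onN fine]] := fine_grid (fun x xs_x => Lambda_ge0 HL (xsL x xs_x)) Qs0.
have [|K LK ubK] := @list_ub_in R L (xs ++ map ratr Qs) (Lambda0 HL).
  by move=> x /(@in_app_or _ _ _ x)[/xsL //|/in_map_iff[q [<- /QsL]]].
have K0 := Lambda_ge0 HL LK.
exists N, (Num.truncn (K * N%:R)), K; split=> // [k kT|||q Qs_q].
- apply: (Lambda_le HL LK (grid_ge0 _ _ _)).
  by rewrite grid_le_truncn.
- by rewrite ltNge grid_le_truncn // ltnn.
- by move=> x xs_x; apply: ubK; apply: in_or_app; left.
- have [k qk] := onN q Qs_q; exists k => //.
  by rewrite -grid_le_truncn // -qk; apply: ubK; apply/in_or_app/or_intror/in_map.
Qed.

Definition fTrue : qformula := fEq tone tone.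

Fixpoint fAndN (n : nat) (F : nat -> qformula) : qformula :=
  if n is n'.+1 then fAnd (fAndN n' F) (F n') else fTrue.

Lemma sat_fAndN (M : AbsGroup) (rel : Rel M) v n F :
  sat rel v (fAndN n F) <-> forall i, (i < n)%N -> sat rel v (F i).
Proof.
elim: n => [|n IH] /=; first by split.
rewrite IH; split=> [[Fn Fi] i|Fi]; first by rewrite ltnS leq_eqVlt => /orP[/eqP->|/Fn].
by split=> [i /ltnW|]; apply: Fi.
Qed.

Lemma wf_fAndN (R : realType) (L : set R) n F :
  (forall i, (i < n)%N -> wf_formula L (F i)) -> wf_formula L (fAndN n F).
Proof.
elim: n => [|n IH] //= wfF; split; last exact: wfF.
by apply: IH => i /ltnW; apply: wfF.
Qed.

Section Diagram.
Variables (G : AbsGroup) (D : list G).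
Local Notation n := (length D).
Local Notation d i := (List.nth i D (gone G)).

Definition eq_diagram : qformula :=
  fAndN n (fun i => fAndN n (fun j =>
    if pselect (d i = d j) then fTrue else fNot (fEq (tvar i) (tvar j)))).

Definition mul_diagram : qformula :=
  fAndN n (fun i => fAndN n (fun j => fAndN n (fun k =>
    if pselect (d k = gmul (d i) (d j)) then fEq (tvar k) (tmul (tvar i) (tvar j))
    else fTrue))).

Definition norm_diagram (R : realType) (l : G -> R) (N T : nat) : qformula :=
  fAndN n (fun i => fAndN T.+1 (fun k =>
    fRel (compare_sq (l (d i)) (ratr (grid N k))) (grid N k) (tvar i))).

Variables (M : AbsGroup) (rel : Rel M) (v : nat -> M).

Lemma sat_eq_diagram : sat rel v eq_diagram <->
  forall i j, (i < n)%N -> (j < n)%N -> v i = v j -> d i = d j.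
Proof.
rewrite sat_fAndN; split=> [Di i j ilt jlt|Di i ilt].
  by move/sat_fAndN: (Di i ilt) => /(_ j jlt); case: pselect.
by apply/sat_fAndN => j jlt; case: pselect => //= dij vij; apply/dij/Di.
Qed.

Lemma sat_mul_diagram : sat rel v mul_diagram <->
  forall i j k, (i < n)%N -> (j < n)%N -> (k < n)%N ->
    d k = gmul (d i) (d j) -> v k = gmul (v i) (v j).
Proof.
rewrite sat_fAndN; split=> [Di i j k ilt jlt klt|Di i ilt].
  by move/sat_fAndN: (Di i ilt) => /(_ j jlt) /sat_fAndN /(_ k klt); case: pselect.
apply/sat_fAndN => j jlt; apply/sat_fAndN => k klt.
by case: pselect => //= dk; apply: Di.
Qed.

Lemma sat_norm_diagram (R : realType) (l : G -> R) N T :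
  sat rel v (norm_diagram l N T) <->
  forall i k, (i < n)%N -> (k <= T)%N ->
    rel (compare_sq (l (d i)) (ratr (grid N k))) (grid N k) (v i).
Proof.
rewrite sat_fAndN; split=> [Di i k ilt kT|Di i ilt].
  by move/sat_fAndN: (Di i ilt) => /(_ k); apply.
by apply/sat_fAndN => k kT; apply: Di.
Qed.

End Diagram.

Lemma metrically_LEF_of_fmp (R : realType) (L : set R) (HL : LambdaSet L)
    (G : AbsGroup) (l : G -> R) (Hl : inv_pseudo_norm L l) :
  fmp_exists L (model_IPMG L) (Gstr l) -> metrically_LEF L l.
Proof.
move=> fmp D Qs QsL _; have [[lL _ _ _] _] := Hl.
have [|N [T [K Hgrid]]] := exists_adapted_grid HL (xs := map l D) _ QsL.
  by move=> x /in_map_iff[g [<- _]].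
pose F := fAnd (eq_diagram D) (fAnd (mul_diagram D) (norm_diagram D l N T)).
have wfF : wf_formula L F.
  split; [|split]; apply: wf_fAndN => i _; apply: wf_fAndN => j jT //=.
  - by case: pselect.
  - by apply: wf_fAndN => k _; case: pselect.
  - by apply: (grid_Lambda Hgrid).
have [|M [rel [finM modelM [v [/sat_eq_diagram vinj [/sat_mul_diagram vM]]]]]] := fmp F wfF.
  exists (fun i => List.nth i D (gone G)).
  split; [apply/sat_eq_diagram|split; [apply/sat_mul_diagram|]] => //.
  by apply/sat_norm_diagram => i k _ _; apply: cmp_compare_sq.
move=> /sat_norm_diagram vnorm.
pose at_idx g i := (i < length D)%N /\ List.nth i D (gone G) = g.
pose idx g := epsilon (inhabits 0%N) (at_idx g).
have idxP g : In g D -> at_idx g (idx g).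
  move=> Dg; apply: epsilon_spec.
  by have [i [/ssrnat.ltP ilt <-]] := In_nth D g (gone G) Dg; exists i.
exists M, (model_norm rel N T K), (fun g => v (idx g)); split=> //.
- exact: (model_norm_inv_pseudo_norm HL modelM (grid_gt0 Hgrid) (grid_Lambda Hgrid)
    (grid_bound_Lambda Hgrid) (grid_bound_lt Hgrid)).
- move=> g h Dg Dh vgh; have [[ig dig] [ih dih]] := (idxP g Dg, idxP h Dh).
  by rewrite -dig -dih; apply: (vinj _ _ ig ih vgh).
- move=> h g Dh Dg Dhg; have [ih dih] := idxP h Dh; have [ig dig] := idxP g Dg.
  have [ihg dihg] := idxP _ Dhg.
  by apply: (vM _ _ _ ih ig ihg); rewrite dihg dih dig.
- move=> g q s Dg Qs_q; have [ig dig] := idxP g Dg.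
  have [kq kqT qk] := grid_Qs Hgrid Qs_q; subst q.
  apply: (model_norm_cmp (grid_gt0 Hgrid)) => //.
  + by apply: (grid_bound_ge Hgrid); apply: in_map.
  + move=> k kT; apply: (model_leq_compare modelM (grid_Lambda Hgrid kT)).
    by rewrite -{1}dig; apply: vnorm.
  + exact: (grid_fine Hgrid (in_map _ _ _ Dg) Qs_q).
Qed.

Lemma fmp_exists_sub (R : realType) (L : set R)
    (model model' : forall M : AbsGroup, Rel M -> Prop) (G : AbsGroup) (relG : Rel G) :
  (forall M rel, model M rel -> model' M rel) ->
  fmp_exists L model relG -> fmp_exists L model' relG.
Proof.
move=> sub fmp f wf satG; have [M [rel [finM modelM satM]]] := fmp f wf satG.
by exists M, rel; split=> //; apply: sub.
Qed.

Theorem mainTheorem18 (R : realType) (L : set R) (HL : LambdaSet L)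
    (G : AbsGroup) (l : G -> R) (Hl : inv_pseudo_norm L l) :
  (metrically_LEF L l <-> fmp_exists L (model_IPMG L) (Gstr l))
  /\ (is_norm L l -> (metrically_LEF L l <-> fmp_exists L (model_IMG L) (Gstr l))).
Proof.
split=> [|l_norm]; split=> [lef|fmp].
- apply: (fmp_exists_of_approx HL (P := fun _ _ => True)) => [C lC lCn _|D Qs QsL Qs0].
    exact: Gstr_model_IPMG.
  by have [C [lC [phi [finC lCn phi_inj phiM phi_cmp]]]] := lef D Qs QsL Qs0; exists C, lC, phi.
- exact: metrically_LEF_of_fmp.
- apply: (fmp_exists_of_approx HL (P := fun C lC => forall c, lC c = 0 -> c = gone C)).
    by move=> C lC lCn lC_def; apply: Gstr_model_IMG.
  by move=> D Qs QsL Qs0; apply: normed_approx.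
- apply: (metrically_LEF_of_fmp HL Hl).
  by apply: fmp_exists_sub fmp => M rel [].
Qed.
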